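(* Let $\mathcal{G}(t)$ be a matrix-weighted switching network satisfying Assumption 1 (described in the context), and let $L^k$ denote its matrix-valued Laplacian on $[t_k,t_{k+1})$. For integers $0\le k'<k''$, let $\widetilde{L}_{[t_{k'},t_{k''})}=\frac{1}{t_{k''}-t_{k'}}\int_{t_{k'}}^{t_{k''}}L(t)\,dt$ be the matrix-valued Laplacian of the integral network over $[t_{k'},t_{k''})$. Then $$\mathrm{null}(\widetilde{L}_{[t_{k'},t_{k''})})=\bigcap_{i=1}^{k''-k'}\mathrm{null}(L^{k'+i-1}).$$
   Context: A matrix-weighted switching network $\mathcal{G}(t)=(\mathcal{V},\mathcal{E}(t),A(t))$ has node set $\mathcal{V}=\{1,\dots,n\}$, $n>1$; each edge $(i,j)\in\mathcal{E}(t)$ carries a symmetric weight $A_{ij}(t)\in\mathbb{R}^{d\times d}$ which is either positive (semi-)definite or negative (semi-)definite, with $A_{ij}=A_{ji}$, $A_{ii}=0$, $A_{ij}(t)=0$ if $(i,j)\notin\mathcal{E}(t)$; standing assumption: for each pair $(i,j)$ the weight $A_{ij}(t)$ has the same sign type (PSD for all $t$, or NSD for all $t$). Set $|A_{ij}|=A_{ij}$ if $A_{ij}\succeq0$ and $-A_{ij}$ if $A_{ij}\preceq0$. With $A=[A_{ij}]\in\mathbb{R}^{dn\times dn}$ and $D=\mathrm{diag}(D_1,\dots,D_n)$, $D_i=\sum_{j:(i,j)\in\mathcal{E}}|A_{ij}|$, the matrix-valued Laplacian is $L=D-A$. Assumption 1: there is a sequence $\{t_k\}_{k\in\mathbb{N}}$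 with $t_0=0$, $t_k\to\infty$, $t_{k+1}-t_k\ge\alpha>0$, and $\mathcal{G}(t)$ is constant on each $[t_k,t_{k+1})$. The integral network over $[t_1,t_2)$ has weights $\widetilde{A}=\frac{1}{t_2-t_1}\int_{t_1}^{t_2}A(t)dt$, degree $\widetilde{D}=\frac{1}{t_2-t_1}\int_{t_1}^{t_2}D(t)dt$, and Laplacian $\widetilde{L}=\widetilde{D}-\widetilde{A}$. *)

From HB Require Import structures.
From mathcomp Require Import all_boot all_order all_algebra.
From mathcomp Require Import all_classical all_reals all_analysis.
Set Implicit Arguments. Unset Strict Implicit. Unset Printing Implicit Defensive.
Import Order.TTheory GRing.Theory Num.Theory.
Local Open Scope classical_set_scope.
Local Open Scope ring_scope.

Section Defs.
Variables (R : realType) (n d : nat).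

Definition weights := 'I_n -> 'I_n -> 'M[R]_d.

Definition psd (M : 'M[R]_d) : Prop := forall v : 'cV[R]_d, 0 <= (v^T *m M *m v) 0 0.
Definition nsd (M : 'M[R]_d) : Prop := forall v : 'cV[R]_d, (v^T *m M *m v) 0 0 <= 0.

Definition mabs (M : 'M[R]_d) : 'M[R]_d := if `[< psd M >] then M else - M.

(* index of the dn x dn matrix: p <-> (i, a), with p = i * d + a *)
Definition blk (p : 'I_(n * d)) : 'I_n * 'I_d :=
  enum_val (cast_ord (esym (mxvec_cast n d)) p).

Definition assemble (B : 'I_n -> 'I_n -> 'M[R]_d) : 'M[R]_(n * d) :=
  \matrix_(p, q) B (blk p).1 (blk q).1 (blk p).2 (blk q).2.

Definition degree (A : weights) (i : 'I_n) : 'M[R]_d := \sum_j mabs (A i j).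

Definition Dmat (A : weights) : 'M[R]_(n * d) :=
  assemble (fun i j => if i == j then degree A i else 0).
Definition Amat (A : weights) : 'M[R]_(n * d) := assemble A.
Definition laplacian (A : weights) : 'M[R]_(n * d) := Dmat A - Amat A.

Definition mx_avg m (M : R -> 'M[R]_m) (t1 t2 : R) : 'M[R]_m :=
  \matrix_(p, q) ((t2 - t1)^-1 *
     Rintegral (@lebesgue_measure R) `[t1, t2[ (fun s => M s p q)).

Definition integral_laplacian (A : R -> weights) (t1 t2 : R) : 'M[R]_(n * d) :=
  mx_avg (fun s => Dmat (A s)) t1 t2 - mx_avg (fun s => Amat (A s)) t1 t2.

Definition nullsp m (M : 'M[R]_m) : set 'cV[R]_m := [set x | M *m x = 0].

Definition matrix_weighted_network (A : R -> weights) : Prop :=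
  [/\ forall s i j, (A s i j)^T = A s i j,
      forall s i j, A s i j = A s j i,
      forall s i, A s i i = 0,
      forall s i j, psd (A s i j) \/ nsd (A s i j)
    & forall i j, (forall s, psd (A s i j)) \/ (forall s, nsd (A s i j))].

Definition assumption1 (A : R -> weights) (t : nat -> R) (alpha : R) : Prop :=
  [/\ t 0%N = 0,
      t @ \oo --> +oo,
      0 < alpha,
      forall k, alpha <= t k.+1 - t k
    & forall k s, t k <= s < t k.+1 -> A s = A (t k)].

End Defs.

(* Over each switching interval the network is frozen, so averaging the
   Laplacian over [t_k', t_k'') gives the positive combination
   sum_k ((t_(k+1) - t_k) / (t_k'' - t_k')) L^k.  Each L^k is symmetric and
   positive semidefinite: the pair (i, j) contributes the form of |A_ij| at
   x_i - x_j (A_ij PSD) or at x_i + x_j (A_ij NSD).  For such matrices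
   x^T M x = 0 forces M x = 0, so the kernel of a positive combination is
   the intersection of the kernels. *)

From HB Require Import structures.
From mathcomp Require Import all_boot all_order all_algebra.
From mathcomp Require Import all_classical all_reals all_analysis measurable_realfun.
From mathcomp Require Import ring lra zify.
Set Implicit Arguments. Unset Strict Implicit. Unset Printing Implicit Defensive.
Import Order.TTheory GRing.Theory Num.Theory.
Local Open Scope classical_set_scope.
Local Open Scope ring_scope.

Section IntegrableSetU.
Context d (T : measurableType d) (R : realType) (mu : {measure set T -> \bar R}).

Lemma integrable_setU (A B : set T) (f : T -> \bar R) :
  measurable A -> measurable B -> [disjoint A & B] ->
  mu.-integrable A f -> mu.-integrable B f -> mu.-integrable (A `|` B) f.
Proof.
move=> mA mB AB /integrableP[mfA iA] /integrableP[mfB iB].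
have mf : measurable_fun (A `|` B) f := (measurable_funU _ mA mB).2 (conj mfA mfB).
apply/integrableP; split => //.
rewrite ge0_integral_setU //; first exact: lte_add_pinfty.
exact: measurableT_comp.
Qed.

End IntegrableSetU.

Section StepIntegral.
Context {R : realType}.
Notation mu := (@lebesgue_measure R).

Lemma integrable_itv_cst (a b c : R) (f : R -> R) :
  (forall s, a <= s < b -> f s = c) -> mu.-integrable `[a, b[ (EFin \o f).
Proof.
move=> fc.
apply: (eq_integrable (mu:=mu) _ (EFin \o cst c)) => //.
  by move=> s /set_mem /=; rewrite in_itv /= => /fc ->.
apply: measurable_bounded_integrable => //; last exact: bounded_cst.
have := lebesgue_measure_itv `[a, b[; move=> /= ->.
by case: ifPn => _; rewrite ?ltry // -EFinD ltry.
Qed.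

Lemma Rintegral_itv_cst (a b c : R) (f : R -> R) : a <= b ->
  (forall s, a <= s < b -> f s = c) -> \int[mu]_(x in `[a, b[) f x = (b - a) * c.
Proof.
move=> ab fc.
have eqf : {in `[a, b[%classic, cst c =1 f}.
  by move=> s /set_mem /=; rewrite in_itv /= => /fc ->.
rewrite -(eq_Rintegral mu eqf) Rintegral_cst //.
have := lebesgue_measure_itv `[a, b[; move=> /= ->; rewrite lte_fin.
have [_|ba] := ltP a b; first by rewrite mulrC.
by rewrite (@le_anti _ _ b a) ?ab ?ba // subrr mul0r mulr0.
Qed.

Variables (t : nat -> R) (f : R -> R) (g : nat -> R).
Hypothesis t_le : forall k, t k <= t k.+1.
Hypothesis f_step : forall k s, t k <= s < t k.+1 -> f s = g k.

Lemma step_integrable_Rintegral a b : (a <= b)%N ->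
  mu.-integrable `[t a, t b[ (EFin \o f) /\
  \int[mu]_(x in `[t a, t b[) f x = \sum_(a <= k < b) (t k.+1 - t k) * g k.
Proof.
have t_homo : {homo t : i j / (i <= j)%N >-> i <= j} := homo_leq lexx le_trans t_le.
move=> /subnKC <-; elim: (b - a)%N => [|m [int_m IH]].
  rewrite addn0 big_geq // set_itv_ge ?bnd_simp ?ltxx //.
  by split; [exact: integrable_set0 | exact: Rintegral_set0].
have split_itv : `[t a, t (a + m.+1)[%classic =
    `[t a, t (a + m)[ `|` `[t (a + m), t (a + m).+1[.
  by rewrite addnS; apply: itv_bndbnd_setU; rewrite bnd_simp ?t_homo ?leq_addr.
have disj : [disjoint `[t a, t (a + m)[%classic & `[t (a + m), t (a + m).+1[%classic].
  apply: lt_disjoint => x y; rewrite !in_itv /= => /andP[_ xm] /andP[my _].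
  exact: lt_le_trans xm my.
have int_m1 : mu.-integrable `[t a, t (a + m.+1)[ (EFin \o f).
  rewrite split_itv; apply: integrable_setU => //.
  exact: integrable_itv_cst (@f_step _).
split => //.
rewrite split_itv Rintegral_setU -?split_itv // IH addnS big_nat_recr ?leq_addr //=.
by rewrite (Rintegral_itv_cst (t_le _) (@f_step _)).
Qed.

End StepIntegral.

Lemma mx_avg_step (R : realType) m (t : nat -> R) (M : R -> 'M[R]_m)
    (G : nat -> 'M[R]_m) a b :
  (forall k, t k <= t k.+1) -> (forall k s, t k <= s < t k.+1 -> M s = G k) ->
  (a <= b)%N ->
  mx_avg M (t a) (t b) = \sum_(a <= k < b) ((t k.+1 - t k) / (t b - t a)) *: G k.
Proof.
move=> t_le M_step ab; apply/matrixP => p q.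
have M_step_pq k s : t k <= s < t k.+1 -> M s p q = G k p q.
  by move=> /M_step ->.
have [_ int_pq] := step_integrable_Rintegral t_le M_step_pq ab.
rewrite !mxE int_pq summxE big_distrr; apply: eq_bigr => k _.
by rewrite mxE /= mulrA [_^-1 * _]mulrC.
Qed.

Section QuadraticForm.
Context {R : comPzRingType} {m : nat}.
Implicit Types (M N : 'M[R]_m) (u v w : 'cV[R]_m).

Definition qform M u v : R := (u^T *m M *m v) 0 0.

Lemma qformDl M u v w : qform M (u + v) w = qform M u w + qform M v w.
Proof. by rewrite /qform linearD /= !mulmxDl !mxE. Qed.

Lemma qformDr M u v w : qform M w (u + v) = qform M w u + qform M w v.
Proof. by rewrite /qform mulmxDr !mxE. Qed.

Lemma qformNl M u w : qform M (- u) w = - qform M u w.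
Proof. by rewrite /qform linearN /= !mulNmx !mxE. Qed.

Lemma qformNr M u w : qform M w (- u) = - qform M w u.
Proof. by rewrite /qform mulmxN !mxE. Qed.

Lemma qformZl M c u w : qform M (c *: u) w = c * qform M u w.
Proof. by rewrite /qform linearZ /= -!scalemxAl !mxE. Qed.

Lemma qformZr M c u w : qform M w (c *: u) = c * qform M w u.
Proof. by rewrite /qform -scalemxAr !mxE. Qed.

Lemma qform0mx u w : qform 0 u w = 0.
Proof. by rewrite /qform mulmx0 mul0mx !mxE. Qed.

Lemma qform_addmx M N u w : qform (M + N) u w = qform M u w + qform N u w.
Proof. by rewrite /qform mulmxDr mulmxDl !mxE. Qed.

Lemma qform_oppmx M u w : qform (- M) u w = - qform M u w.
Proof. by rewrite /qform mulmxN mulNmx !mxE. Qed.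

Lemma qform_scalemx M c u w : qform (c *: M) u w = c * qform M u w.
Proof. by rewrite /qform -scalemxAr -scalemxAl !mxE. Qed.

Lemma qform_summx I (r : seq I) (P : pred I) (F : I -> 'M[R]_m) u w :
  qform (\sum_(i <- r | P i) F i) u w = \sum_(i <- r | P i) qform (F i) u w.
Proof.
exact: (big_morph (fun M => qform M u w) (fun M N => qform_addmx M N u w)
                  (qform0mx u w)).
Qed.

Lemma qform_sym M u v : M^T = M -> qform M u v = qform M v u.
Proof.
move=> M_sym; rewrite /qform [LHS](_ : _ = ((u^T *m M *m v)^T) 0 0); last first.
  by rewrite [RHS]mxE.
by rewrite !trmx_mul trmxK M_sym mulmxA.
Qed.

End QuadraticForm.

Section PsdKernel.
Context {R : realFieldType} {m : nat}.

Lemma trmx_mul_self_ge0 (y : 'cV[R]_m) : 0 <= (y^T *m y) 0 0.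
Proof. by rewrite mxE sumr_ge0 // => i _; rewrite mxE -expr2 sqr_ge0. Qed.

Lemma trmx_mul_self_eq0 (y : 'cV[R]_m) : (y^T *m y) 0 0 = 0 -> y = 0.
Proof.
rewrite mxE => /eqP; rewrite psumr_eq0 => [/allP y0|i _]; last first.
  by rewrite mxE -expr2 sqr_ge0.
apply/matrixP => i j; rewrite (ord1 j) mxE.
by have /implyP/(_ isT) := y0 i (mem_index_enum i); rewrite mxE mulf_eq0 orbb => /eqP.
Qed.

Lemma psd_qform_eq0 (M : 'M[R]_m) x : M^T = M -> (forall y, 0 <= qform M y y) ->
  qform M x x = 0 -> M *m x = 0.
Proof.
move=> M_sym M_psd qxx; set y := M *m x.
have qxw w : qform M x w = (y^T *m w) 0 0 by rewrite /qform /y trmx_mul M_sym.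
set s := (y^T *m y) 0 0; set Q := qform M y y.
have qyx : qform M y x = s by rewrite qform_sym // qxw.
have quad r : 0 <= 2 * r * s + r ^+ 2 * Q.
  have := M_psd (x + r *: y).
  by rewrite !(qformDl, qformDr, qformZl, qformZr) qxx qxw qyx -/s -/Q; nra.
have s_ge0 : 0 <= s := trmx_mul_self_ge0 y.
have Q_ge0 : 0 <= Q := M_psd y.
apply: trmx_mul_self_eq0; apply/eqP; rewrite -/s -sqrf_eq0 eq_le sqr_ge0 andbT.
set u := (Q + 1)^-1.
have u_gt0 : 0 < u by rewrite invr_gt0 ltr_wpDl.
have uQ : u * Q = 1 - u.
  by rewrite -[X in X - u](mulVf (lt0r_neq0 (ltr_wpDl Q_ge0 ltr01))) -/u; ring.
(* evaluate [quad] at r = - s / (Q + 1) *)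
have := quad (- s * u).
have -> : (- s * u) ^+ 2 * Q = s ^+ 2 * u * (u * Q) by ring.
have -> : 2 * (- s * u) * s + s ^+ 2 * u * (u * Q) = - (s ^+ 2 * (u * (1 + u))).
  by rewrite uQ; ring.
by rewrite oppr_ge0 pmulr_lle0 // mulr_gt0 // addr_gt0.
Qed.

End PsdKernel.

Section Laplacian.
Context {R : realType} {n d : nat}.
Implicit Types (A : weights R n d) (x : 'cV[R]_(n * d)).

Definition unblk (u : 'I_n * 'I_d) : 'I_(n * d) :=
  cast_ord (mxvec_cast n d) (enum_rank u).

Lemma unblkK : cancel unblk (@blk n d).
Proof. by move=> u; rewrite /blk /unblk cast_ordK enum_rankK. Qed.

Lemma blkK : cancel (@blk n d) unblk.
Proof. by move=> p; rewrite /blk /unblk enum_valK cast_ordKV. Qed.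

Definition blkvec x (i : 'I_n) : 'cV[R]_d := \col_a x (unblk (i, a)) 0.

Lemma qform_assemble (B : 'I_n -> 'I_n -> 'M[R]_d) x y :
  qform (assemble B) x y = \sum_i \sum_j qform (B i j) (blkvec x i) (blkvec y j).
Proof.
pose G (u v : 'I_n * 'I_d) := x (unblk u) 0 * B u.1 v.1 u.2 v.2 * y (unblk v) 0.
have reindex_blk (F : 'I_(n * d) -> R) : \sum_p F p = \sum_u F (unblk u).
  by apply: reindex; exists (@blk n d) => u _; [exact: unblkK | exact: blkK].
have sum_pair (F : 'I_n * 'I_d -> R) : \sum_u F u = \sum_i \sum_a F (i, a).
  by rewrite pair_bigA; apply: eq_bigr => -[].
have -> : qform (assemble B) x y = \sum_v \sum_u G u v.
  rewrite /qform mxE reindex_blk; apply: eq_bigr => v _.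
  rewrite mxE big_distrl reindex_blk /=.
  by apply: eq_bigr => u _; rewrite /G !mxE !unblkK.
rewrite exchange_big sum_pair; apply: eq_bigr => i _.
under eq_bigr do rewrite sum_pair.
rewrite exchange_big; apply: eq_bigr => j _.
rewrite /qform mxE exchange_big; apply: eq_bigr => b _.
rewrite mxE big_distrl; apply: eq_bigr => a _.
by rewrite /G /blkvec !mxE.
Qed.

Lemma qform_laplacian A x :
  qform (laplacian A) x x =
  \sum_i \sum_j (qform (mabs (A i j)) (blkvec x i) (blkvec x i)
                 - qform (A i j) (blkvec x i) (blkvec x j)).
Proof.
rewrite /laplacian qform_addmx qform_oppmx /Dmat /Amat !qform_assemble -sumrB.
apply: eq_bigr => i _; rewrite sumrB (bigD1 i) //= eqxx big1 ?addr0.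
  by rewrite /degree qform_summx.
by move=> j /negbTE; rewrite eq_sym => ->; exact: qform0mx.
Qed.

Lemma mabs_qform_ge0 (M : 'M[R]_d) u v : psd M \/ nsd M ->
  0 <= qform (mabs M) u u + qform (mabs M) v v - qform M u v - qform M v u.
Proof.
move=> M_sign; rewrite /mabs; case: (boolP `[< psd M >]) => [/asboolW M_psd | M_npsd].
  have := M_psd (u - v); rewrite -/(qform M (u - v) (u - v)).
  by rewrite !(qformDl, qformDr, qformNl, qformNr); lra.
have M_nsd : nsd M by case: M_sign => // /asboolT; rewrite (negbTE M_npsd).
have := M_nsd (u + v); rewrite -/(qform M (u + v) (u + v)).
by rewrite !(qform_oppmx, qformDl, qformDr); lra.
Qed.

Lemma laplacian_psd A x :
  (forall i j, A i j = A j i) -> (forall i j, psd (A i j) \/ nsd (A i j)) ->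
  0 <= qform (laplacian A) x x.
Proof.
move=> A_sym A_sign; rewrite qform_laplacian.
pose T i j := qform (mabs (A i j)) (blkvec x i) (blkvec x i)
              - qform (A i j) (blkvec x i) (blkvec x j).
change (0 <= \sum_i \sum_j T i j); set S := \sum_i \sum_j T i j.
have -> : S = (\sum_i \sum_j (T i j + T j i)) / 2.
  rewrite (eq_bigr (fun i => \sum_j T i j + \sum_j T j i)); last first.
    by move=> i _; rewrite big_split.
  by rewrite big_split /= [X in _ + X]exchange_big -/S; field.
apply: divr_ge0 => //; apply: sumr_ge0 => i _; apply: sumr_ge0 => j _.
rewrite /T (A_sym j i).
have := mabs_qform_ge0 (blkvec x i) (blkvec x j) (A_sign i j); lra.
Qed.

Lemma laplacian_sym A :
  (forall i j, (A i j)^T = A i j) -> (forall i j, A i j = A j i) ->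
  (laplacian A)^T = laplacian A.
Proof.
move=> A_tr A_sym.
have D_sym i : (degree A i)^T = degree A i.
  rewrite /degree raddf_sum; apply: eq_bigr => j _ /=.
  by rewrite /mabs; case: ifP => _; rewrite ?linearN /= A_tr.
apply/matrixP => p q; rewrite /laplacian /Dmat /Amat /assemble !mxE.
congr (_ - _); last by rewrite (A_sym (blk q).1) -[in LHS]A_tr mxE.
rewrite eq_sym; case: eqP => [->|_]; last by rewrite !mxE.
by rewrite -[in LHS]D_sym mxE.
Qed.

End Laplacian.

Lemma nullsp_psd_sum (R : realType) m (I : eqType) (r : seq I) (c : I -> R)
    (M : I -> 'M[R]_m) :
  (forall i, 0 < c i) -> (forall i, (M i)^T = M i) ->
  (forall i x, 0 <= qform (M i) x x) ->
  nullsp (\sum_(i <- r) c i *: M i) = [set x | forall i, i \in r -> M i *m x = 0].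
Proof.
move=> c_gt0 M_sym M_psd; apply/seteqP; split => x /= Mx; last first.
  rewrite /nullsp /= mulmx_suml big_seq big1 // => i ri.
  by rewrite -scalemxAl Mx // scaler0.
move=> i ri; apply: psd_qform_eq0 => //.
have : qform (\sum_(i <- r) c i *: M i) x x = 0.
  by rewrite /qform -mulmxA Mx mulmx0 mxE.
rewrite qform_summx => /eqP; rewrite psumr_eq0 => [/allP/(_ i ri)|j _]; last first.
  by rewrite qform_scalemx mulr_ge0 // ltW.
by rewrite qform_scalemx mulf_eq0 gt_eqF //= => /eqP.
Qed.

Lemma integral_laplacian_step (R : realType) n d (A : R -> weights R n d)
    (t : nat -> R) a b :
  (forall k, t k <= t k.+1) -> (forall k s, t k <= s < t k.+1 -> A s = A (t k)) ->
  (a <= b)%N ->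
  integral_laplacian A (t a) (t b) =
  \sum_(a <= k < b) ((t k.+1 - t k) / (t b - t a)) *: laplacian (A (t k)).
Proof.
move=> t_le A_step ab.
have step_of (F : weights R n d -> 'M[R]_(n * d)) k s :
  t k <= s < t k.+1 -> F (A s) = F (A (t k)) by move=> /A_step ->.
rewrite /integral_laplacian !(mx_avg_step t_le (step_of _) ab) -sumrB.
by apply: eq_bigr => k _; rewrite -scalerBr.
Qed.

Theorem lemma9 (R : realType) (n d : nat) (A : R -> weights R n d)
  (t : nat -> R) (alpha : R) (k' k'' : nat) :
  (1 < n)%N ->
  matrix_weighted_network A ->
  assumption1 A t alpha ->
  (k' < k'')%N ->
  nullsp (integral_laplacian A (t k') (t k'')) =
  \bigcap_(i in [set i : nat | (1 <= i <= k'' - k')%N])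
     nullsp (laplacian (A (t (k' + i - 1)%N))).
Proof.
move=> _ [A_tr A_sym _ A_sign _] [_ _ alpha_gt0 t_gap A_step] lt_k.
have t_lt k : t k < t k.+1 by have := t_gap k; lra.
have t_le k : t k <= t k.+1 := ltW (t_lt k).
have dt_gt0 : 0 < t k'' - t k' by rewrite subr_gt0 (homo_ltn lt_trans t_lt).
rewrite integral_laplacian_step ?(ltnW lt_k) // nullsp_psd_sum; last 3 first.
- by move=> k; rewrite divr_gt0 // subr_gt0.
- by move=> k; exact: laplacian_sym.
- by move=> k x; exact: laplacian_psd.
apply/seteqP; split => x /= Lx.
- by move=> i /andP[i_ge1 i_le]; apply: Lx; rewrite mem_index_iota; lia.
- move=> k; rewrite mem_index_iota => /andP[k_ge k_lt].
  have -> : k = (k' + (k - k' + 1) - 1)%N by lia.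
  by apply: Lx => /=; lia.
Qed.
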